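(* Let $\triangle=\{a,b,c\}\subset\mathbb{R}^2$ be three non-collinear points. The three lines each passing through two of the midpoints of the sides of $\mathrm{conv}(\triangle)$ divide the plane into $7$ open connected regions. Then $\mathcal{M}_\triangle$ equals the union of the closures of those of these $7$ regions whose closures contain none of the points $a,b,c$.
   Context: A set $S\subset\mathbb{R}^2$ is in convex position if every point of $S$ lies on the boundary of $\mathrm{conv}(S)$. For a point set $X\subset\mathbb{R}^2$ and a point $O$, $X_O=2O-X$ is the reflection of $X$ in $O$. The point $O$ is an admissible center for $X$ if $X\cup X_O$ is in convex position; $\mathcal{M}_X$ denotes the set of all admissible centers for $X$. *)

From Stdlib Require Import Reals.
Open Scope R_scope.

Definition pt : Type := (R * R)%type.

Definition padd (p q : pt) : pt := (fst p + fst q, snd p + snd q).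
Definition psub (p q : pt) : pt := (fst p - fst q, snd p - snd q).
Definition pscale (t : R) (p : pt) : pt := (t * fst p, t * snd p).
Definition cross (u v : pt) : R := fst u * snd v - snd u * fst v.
Definition dist (p q : pt) : R :=
  sqrt ((fst p - fst q) ^ 2 + (snd p - snd q) ^ 2).

Definition convex (C : pt -> Prop) : Prop :=
  forall p q t, C p -> C q -> 0 <= t <= 1 ->
    C (padd (pscale t p) (pscale (1 - t) q)).

Definition conv (S : pt -> Prop) : pt -> Prop :=
  fun x => forall C, convex C -> (forall y, S y -> C y) -> C x.

Definition closure (A : pt -> Prop) : pt -> Prop :=
  fun x => forall eps, 0 < eps -> exists y, A y /\ dist x y < eps.
Definition interior (A : pt -> Prop) : pt -> Prop :=
  fun x => exists eps, 0 < eps /\ forall y, dist x y < eps -> A y.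
Definition boundary (A : pt -> Prop) : pt -> Prop :=
  fun x => closure A x /\ ~ interior A x.

Definition convex_position (S : pt -> Prop) : Prop :=
  forall x, S x -> boundary (conv S) x.

Definition reflect_pt (O x : pt) : pt := (2 * fst O - fst x, 2 * snd O - snd x).
Definition reflect_set (O : pt) (X : pt -> Prop) : pt -> Prop :=
  fun p => exists x, X x /\ p = reflect_pt O x.

Definition admissible_center (X : pt -> Prop) (O : pt) : Prop :=
  convex_position (fun p => X p \/ reflect_set O X p).

Definition M_set (X : pt -> Prop) : pt -> Prop := fun O => admissible_center X O.

Definition tri_set (a b c : pt) : pt -> Prop := fun p => p = a \/ p = b \/ p = c.
Definition noncollinear (a b c : pt) : Prop := cross (psub b a) (psub c a) <> 0.

Definition midpoint (p q : pt) : pt := ((fst p + fst q) / 2, (snd p + snd q) / 2).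
Definition line_through (p q : pt) : pt -> Prop :=
  fun x => cross (psub q p) (psub x p) = 0.

Definition cont_path (g : R -> pt) : Prop :=
  forall t, 0 <= t <= 1 -> forall eps, 0 < eps -> exists delta, 0 < delta /\
    forall s, 0 <= s <= 1 -> Rabs (s - t) < delta -> dist (g s) (g t) < eps.
Definition path_in (U : pt -> Prop) (x y : pt) : Prop :=
  exists g, cont_path g /\ g 0 = x /\ g 1 = y /\ forall t, 0 <= t <= 1 -> U (g t).

Definition component (U Rg : pt -> Prop) : Prop :=
  exists x, U x /\ forall y, Rg y <-> path_in U x y.

Definition midline_complement (a b c : pt) : pt -> Prop :=
  fun x =>
    ~ line_through (midpoint a b) (midpoint a c) x /\
    ~ line_through (midpoint a b) (midpoint b c) x /\
    ~ line_through (midpoint a c) (midpoint b c) x.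

(* In barycentric coordinates (p, q, r) of O with respect to a, b, c, the three midlines are
   p = 1/2, q = 1/2 and r = 1/2; since p + q + r = 1, the seven regions are the sign patterns
   of (p - 1/2, q - 1/2, r - 1/2) other than (+, +, +), and the closed regions containing a vertex
   are those of pattern (+, -, -) up to rotation.  The vertex a is interior to the hull of
   {a, b, c, 2O - a, 2O - b, 2O - c} exactly when p > 1/2 > q, r: then a lies in the open
   parallelogram spanned by b, c and their reflections.  Otherwise one of p, -q, -r is a
   supporting functional at a, and by the point symmetry its negation supports 2O - a.  Hence O is
   admissible iff no coordinate pattern (+, -, -) occurs strictly, which is the union of the
   closed regions avoiding the vertices. *)

From Pilot Require Import Defs.
From Stdlib Require Import Reals Lra Psatz.
Open Scope R_scope.

Lemma Rabs_fst_le_dist (x y : pt) : Rabs (fst x - fst y) <= Defs.dist x y.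
Proof.
  unfold Defs.dist. rewrite <- (sqrt_pow2 (Rabs (fst x - fst y))) by apply Rabs_pos.
  apply sqrt_le_1_alt. rewrite pow2_abs. pose proof (pow2_ge_0 (snd x - snd y)). lra.
Qed.

Lemma Rabs_snd_le_dist (x y : pt) : Rabs (snd x - snd y) <= Defs.dist x y.
Proof.
  unfold Defs.dist. rewrite <- (sqrt_pow2 (Rabs (snd x - snd y))) by apply Rabs_pos.
  apply sqrt_le_1_alt. rewrite pow2_abs. pose proof (pow2_ge_0 (fst x - fst y)). lra.
Qed.

Lemma dist_le_Rabs_add (x y : pt) :
  Defs.dist x y <= Rabs (fst x - fst y) + Rabs (snd x - snd y).
Proof.
  pose proof (Rabs_pos (fst x - fst y)); pose proof (Rabs_pos (snd x - snd y)).
  unfold Defs.dist. rewrite <- (sqrt_pow2 (Rabs (fst x - fst y) + Rabs (snd x - snd y))) by lra.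
  apply sqrt_le_1_alt. rewrite <- (pow2_abs (fst x - fst y)), <- (pow2_abs (snd x - snd y)). nra.
Qed.

Lemma dist_xx (x : pt) : Defs.dist x x = 0.
Proof. unfold Defs.dist. rewrite !Rminus_diag, pow_i, Rplus_0_l by lia. apply sqrt_0. Qed.

Lemma dist_comm (x y : pt) : Defs.dist x y = Defs.dist y x.
Proof. unfold Defs.dist. f_equal. ring. Qed.

Lemma dist_ge0 (x y : pt) : 0 <= Defs.dist x y.
Proof. apply sqrt_pos. Qed.

Lemma dist_translate (x w : pt) (d : R) :
  Defs.dist x (padd x (pscale d w)) <= Rabs d * (Rabs (fst w) + Rabs (snd w)).
Proof.
  eapply Rle_trans; [apply dist_le_Rabs_add|]; unfold padd, pscale; simpl.
  replace (fst x - (fst x + d * fst w)) with (- (d * fst w)) by ring.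
  replace (snd x - (snd x + d * snd w)) with (- (d * snd w)) by ring.
  rewrite !Rabs_Ropp, !Rabs_mult. lra.
Qed.

Definition affine_fun (f : pt -> R) : Prop :=
  exists n1 n2 k, forall z, f z = n1 * fst z + n2 * snd z + k.

Definition lipschitz (h : pt -> R) (K : R) : Prop :=
  forall x y, Rabs (h y - h x) <= K * Defs.dist x y.

Lemma affine_fun_scale_add f u v : affine_fun f -> affine_fun (fun z => u * f z + v).
Proof.
  intros [n1 [n2 [k Hf]]]. exists (u * n1), (u * n2), (u * k + v). intros z. rewrite Hf. ring.
Qed.

Lemma affine_fun_comb f p q t :
  affine_fun f -> f (padd (pscale t p) (pscale (1 - t) q)) = t * f p + (1 - t) * f q.
Proof. intros [n1 [n2 [k Hf]]]. rewrite !Hf. unfold padd, pscale; simpl. ring. Qed.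

Lemma affine_fun_reflect f O z : affine_fun f -> f (reflect_pt O z) = 2 * f O - f z.
Proof. intros [n1 [n2 [k Hf]]]. rewrite !Hf. unfold reflect_pt; simpl. ring. Qed.

Lemma affine_fun_translate f x P Q d : affine_fun f ->
  f (padd x (pscale d (psub P Q))) = f x + d * (f P - f Q).
Proof. intros [n1 [n2 [k Hf]]]. rewrite !Hf. unfold padd, pscale, psub; simpl. ring. Qed.

Lemma affine_fun_lipschitz f : affine_fun f -> exists K, 0 <= K /\ lipschitz f K.
Proof.
  intros [n1 [n2 [k Hf]]]. exists (Rabs n1 + Rabs n2).
  pose proof (Rabs_pos n1); pose proof (Rabs_pos n2). split; [lra|].
  intros x y. rewrite !Hf.
  replace (n1 * fst y + n2 * snd y + k - (n1 * fst x + n2 * snd x + k))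
    with (n1 * - (fst x - fst y) + n2 * - (snd x - snd y)) by ring.
  eapply Rle_trans; [apply Rabs_triang|]. rewrite !Rabs_mult, !Rabs_Ropp.
  pose proof (Rabs_fst_le_dist x y); pose proof (Rabs_snd_le_dist x y). nra.
Qed.

Lemma lipschitz_Rabs_add f g Kf Kg : lipschitz f Kf -> lipschitz g Kg ->
  lipschitz (fun z => Rabs (f z) + Rabs (g z)) (Kf + Kg).
Proof.
  intros Hf Hg x y. specialize (Hf x y). specialize (Hg x y).
  pose proof (Rabs_triang_inv (f y) (f x)); pose proof (Rabs_triang_inv (f x) (f y)).
  pose proof (Rabs_triang_inv (g y) (g x)); pose proof (Rabs_triang_inv (g x) (g y)).
  rewrite (Rabs_minus_sym (f x)), (Rabs_minus_sym (g x)) in *. split_Rabs; lra.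
Qed.

Lemma lipschitz_lt_nbhd h K m x : 0 <= K -> lipschitz h K -> h x < m ->
  exists eps, 0 < eps /\ forall y, Defs.dist x y < eps -> h y < m.
Proof.
  intros HK Hh Hx. exists ((m - h x) / (K + 1)). split; [apply Rdiv_lt_0_compat; lra|].
  intros y Hy. specialize (Hh x y). pose proof (dist_ge0 x y).
  assert (Hy' : Defs.dist x y * (K + 1) < m - h x).
  { apply (Rmult_lt_compat_r (K + 1)) in Hy; [|lra]. unfold Rdiv in Hy.
    rewrite Rmult_assoc, Rinv_l, Rmult_1_r in Hy by lra. exact Hy. }
  pose proof (Rle_abs (h y - h x)). nra.
Qed.

Lemma conv_convex S : convex (conv S).
Proof. intros p q t Hp Hq Ht C HC HS. apply HC; [apply Hp | apply Hq | exact Ht]; auto. Qed.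

Lemma conv_sub (S : pt -> Prop) x : S x -> conv S x.
Proof. intros Hx C _ HS. auto. Qed.

Lemma not_interior_conv_support S x f P Q : affine_fun f -> f Q < f P ->
  (forall z, S z -> f z <= f x) -> ~ Defs.interior (conv S) x.
Proof.
  intros Hf HPQ HS [eps [Heps Hball]].
  set (w := psub P Q). set (A := Rabs (fst w) + Rabs (snd w)).
  assert (HA : 0 <= A) by (unfold A; pose proof (Rabs_pos (fst w)); pose proof (Rabs_pos (snd w)); lra).
  set (d := eps / (2 * (A + 1))).
  assert (Hd : 0 < d) by (apply Rdiv_lt_0_compat; lra).
  assert (Hdist : Defs.dist x (padd x (pscale d w)) < eps).
  { eapply Rle_lt_trans; [apply dist_translate|]. rewrite (Rabs_pos_eq d) by lra. fold A.
    assert (d * (2 * (A + 1)) = eps) by (unfold d; field; lra). nra. }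
  assert (Hhalf : conv S (padd x (pscale d w)) -> f (padd x (pscale d w)) <= f x).
  { intros Hin. apply (Hin (fun z => f z <= f x)); [|exact HS].
    intros p q t Hp Hq Ht. rewrite affine_fun_comb by exact Hf. nra. }
  specialize (Hhalf (Hball _ Hdist)). unfold w in Hhalf.
  rewrite affine_fun_translate in Hhalf by exact Hf. nra.
Qed.

Lemma conv_reflect_segment S O b sigma : S b -> S (reflect_pt O b) -> Rabs sigma <= 1 ->
  conv S (padd O (pscale sigma (psub b O))).
Proof.
  intros Hb Hb' Hs.
  replace (padd O (pscale sigma (psub b O)))
    with (padd (pscale ((1 + sigma) / 2) b) (pscale (1 - (1 + sigma) / 2) (reflect_pt O b))).
  - apply conv_convex; try apply conv_sub; auto. split_Rabs; lra.
  - unfold padd, pscale, psub, reflect_pt; simpl. f_equal; field.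
Qed.

(** Also holds for [y = 0], where [x / y] is Rocq's junk value [0]. *)
Lemma Rabs_div_le_1 x y : Rabs x <= y -> Rabs (x / y) <= 1 /\ y * (x / y) = x.
Proof.
  intros Hxy. destruct (Req_dec y 0) as [->|Hy].
  - assert (x = 0) by (split_Rabs; lra). subst x. unfold Rdiv. rewrite Rmult_0_l, Rabs_R0. lra.
  - split; [|field; exact Hy]. pose proof (Rabs_pos x).
    unfold Rdiv. rewrite Rabs_mult, Rabs_inv, (Rabs_pos_eq y) by lra.
    apply (Rmult_le_reg_r y); [lra|]. rewrite Rmult_assoc, Rinv_l, Rmult_1_r by exact Hy. lra.
Qed.

(** Split the point as a convex combination, with weight [(1 + |s| - |t|) / 2], of a point
    of the diagonal through [b] and one of the diagonal through [c]. *)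
Lemma conv_parallelogram S O b c s t :
  S b -> S c -> S (reflect_pt O b) -> S (reflect_pt O c) -> Rabs s + Rabs t <= 1 ->
  conv S (padd O (padd (pscale s (psub b O)) (pscale t (psub c O)))).
Proof.
  intros Hb Hc Hb' Hc' Hst.
  set (lam := (1 + Rabs s - Rabs t) / 2).
  destruct (Rabs_div_le_1 s lam) as [Hsig Hs]; [unfold lam; lra|].
  destruct (Rabs_div_le_1 t (1 - lam)) as [Htau Ht]; [unfold lam; lra|].
  replace (padd O (padd (pscale s (psub b O)) (pscale t (psub c O))))
    with (padd (pscale lam (padd O (pscale (s / lam) (psub b O))))
               (pscale (1 - lam) (padd O (pscale (t / (1 - lam)) (psub c O))))).
  - apply conv_convex; [apply conv_reflect_segment; auto | apply conv_reflect_segment; auto |].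
    pose proof (Rabs_pos s); pose proof (Rabs_pos t). unfold lam; lra.
  - set (sigma := s / lam) in *. set (tau := t / (1 - lam)) in *. clearbody lam sigma tau.
    subst s t. unfold padd, pscale, psub; simpl. f_equal; ring.
Qed.

Lemma cross_decomp u v w : cross u v <> 0 ->
  w = padd (pscale (cross w v / cross u v) u) (pscale (cross u w / cross u v) v).
Proof.
  unfold cross, padd, pscale. intros H. destruct w as [w1 w2]; simpl. f_equal; field; exact H.
Qed.

Lemma affine_fun_cross_l O v k : affine_fun (fun y => cross (psub y O) v / k).
Proof.
  exists (snd v / k), (- fst v / k), ((snd O * fst v - fst O * snd v) / k).
  intros z. unfold cross, psub; simpl. unfold Rdiv. ring.
Qed.

Lemma affine_fun_cross_r O u k : affine_fun (fun y => cross u (psub y O) / k).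
Proof.
  exists (- snd u / k), (fst u / k), ((fst O * snd u - snd O * fst u) / k).
  intros z. unfold cross, psub; simpl. unfold Rdiv. ring.
Qed.

Lemma interior_conv_parallelogram S O b c x :
  let E := cross (psub b O) (psub c O) in
  E <> 0 -> S b -> S c -> S (reflect_pt O b) -> S (reflect_pt O c) ->
  Rabs (cross (psub x O) (psub c O) / E) + Rabs (cross (psub b O) (psub x O) / E) < 1 ->
  Defs.interior (conv S) x.
Proof.
  intros E HE Hb Hc Hb' Hc' Hx.
  destruct (affine_fun_lipschitz _ (affine_fun_cross_l O (psub c O) E)) as [Ks [HKs Ls]].
  destruct (affine_fun_lipschitz _ (affine_fun_cross_r O (psub b O) E)) as [Kt [HKt Lt]].
  destruct (lipschitz_lt_nbhd _ (Ks + Kt) 1 x ltac:(lra) (lipschitz_Rabs_add _ _ _ _ Ls Lt) Hx)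
    as [eps [Heps Hball]].
  exists eps. split; [exact Heps|]. intros y Hy.
  replace y with (padd O (padd (pscale (cross (psub y O) (psub c O) / E) (psub b O))
                               (pscale (cross (psub b O) (psub y O) / E) (psub c O)))).
  - apply conv_parallelogram; auto. left. exact (Hball y Hy).
  - unfold E. rewrite <- (cross_decomp (psub b O) (psub c O) (psub y O) HE).
    unfold padd, psub; destruct y; simpl. f_equal; ring.
Qed.

(** [bary a b c z] is the barycentric coordinate of [z] at the vertex [a]. *)
Definition bary (a b c z : pt) : R := cross (psub b z) (psub c z) / cross (psub b a) (psub c a).

Lemma affine_fun_bary a b c : affine_fun (bary a b c).
Proof.
  set (D := cross (psub b a) (psub c a)).
  exists ((snd b - snd c) / D), ((fst c - fst b) / D), ((fst b * snd c - snd b * fst c) / D).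
  intros z. unfold bary. fold D. unfold cross, psub; simpl. unfold Rdiv. ring.
Qed.

Lemma cross_rotate a b c : cross (psub c b) (psub a b) = cross (psub b a) (psub c a).
Proof. unfold cross, psub; simpl; ring. Qed.

Lemma noncollinear_rotate a b c : noncollinear a b c -> noncollinear b c a.
Proof. unfold noncollinear. rewrite (cross_rotate a b c). auto. Qed.

Lemma bary_sum a b c z : noncollinear a b c -> bary a b c z + bary b c a z + bary c a b z = 1.
Proof.
  unfold noncollinear, bary. intros H. rewrite (cross_rotate a b c), <- (cross_rotate c a b).
  revert H. unfold cross, psub; simpl. intros H. field. exact H.
Qed.

Lemma bary_at_vertices a b c : noncollinear a b c ->
  bary a b c a = 1 /\ bary a b c b = 0 /\ bary a b c c = 0 /\
  bary b c a a = 0 /\ bary b c a b = 1 /\ bary b c a c = 0 /\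
  bary c a b a = 0 /\ bary c a b b = 0 /\ bary c a b c = 1.
Proof.
  intros H. pose proof (noncollinear_rotate _ _ _ H) as H2.
  pose proof (noncollinear_rotate _ _ _ H2) as H3.
  assert (Hv : forall u v w, noncollinear u v w -> bary u v w u = 1 /\ bary u v w v = 0 /\ bary u v w w = 0).
  { unfold noncollinear, bary. intros u v w Huvw. unfold Rdiv. split; [apply Rinv_r, Huvw|].
    unfold cross, psub; simpl. split; ring. }
  destruct (Hv _ _ _ H) as (? & ? & ?). destruct (Hv _ _ _ H2) as (? & ? & ?).
  destruct (Hv _ _ _ H3) as (? & ? & ?). tauto.
Qed.

Lemma bary_surj a b c p q r : noncollinear a b c -> p + q + r = 1 ->
  exists y, bary a b c y = p /\ bary b c a y = q /\ bary c a b y = r.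
Proof.
  intros H Hs. exists (p * fst a + q * fst b + r * fst c, p * snd a + q * snd b + r * snd c).
  replace r with (1 - p - q) by lra. unfold bary.
  rewrite (cross_rotate a b c), <- (cross_rotate c a b).
  revert H. unfold noncollinear, cross, psub; simpl. intros H. repeat split; field; exact H.
Qed.

(** With [(p, q, r)] the coordinates of [O], [a - O = -(q/p) (b - O) - (r/p) (c - O)],
    which lies strictly inside the parallelogram of [conv_parallelogram] iff [|q| + |r| < p]. *)
Lemma vertex_interior a b c O (S : pt -> Prop) : noncollinear a b c ->
  S b -> S c -> S (reflect_pt O b) -> S (reflect_pt O c) ->
  1/2 < bary a b c O -> bary b c a O < 1/2 -> bary c a b O < 1/2 ->
  Defs.interior (conv S) a.
Proof.
  intros Hnc Hb Hc Hb' Hc' Hp Hq Hr.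
  pose proof (bary_sum a b c O Hnc) as Hsum.
  set (D := cross (psub b a) (psub c a)).
  assert (HD : D <> 0) by exact Hnc.
  set (p := bary a b c O) in *. set (q := bary b c a O) in *. set (r := bary c a b O) in *.
  assert (HE : cross (psub b O) (psub c O) = p * D) by (unfold p, bary; fold D; field; exact HD).
  assert (Hs : cross (psub a O) (psub c O) = - q * D).
  { unfold q, bary. rewrite (cross_rotate a b c). fold D. unfold cross, psub; simpl. field. exact HD. }
  assert (Ht : cross (psub b O) (psub a O) = - r * D).
  { unfold r, bary. rewrite <- (cross_rotate c a b). fold D. unfold cross, psub; simpl. field. exact HD. }
  apply (interior_conv_parallelogram S O b c a); auto.
  - rewrite HE. apply Rmult_integral_contrapositive. split; [lra | exact HD].
  - rewrite HE, Hs, Ht.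
    replace (- q * D / (p * D)) with (- q / p) by (field; split; [exact HD | lra]).
    replace (- r * D / (p * D)) with (- r / p) by (field; split; [exact HD | lra]).
    unfold Rdiv. rewrite !Rabs_mult, Rabs_inv, (Rabs_pos_eq p), !Rabs_Ropp by lra.
    assert (Hqr : Rabs q + Rabs r < p) by (split_Rabs; lra).
    apply (Rmult_lt_reg_r p); [lra|].
    rewrite Rmult_plus_distr_r, !Rmult_assoc, Rinv_l by lra. lra.
Qed.

Definition six_points (a b c O : pt) (z : pt) : Prop :=
  z = a \/ z = b \/ z = c \/ z = reflect_pt O a \/ z = reflect_pt O b \/ z = reflect_pt O c.

Lemma six_points_rotate a b c O z : six_points a b c O z -> six_points b c a O z.
Proof. unfold six_points. tauto. Qed.

Lemma tri_set_reflect_iff a b c O z :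
  tri_set a b c z \/ reflect_set O (tri_set a b c) z <-> six_points a b c O z.
Proof.
  unfold tri_set, reflect_set, six_points. split.
  - intros [H | [x [[-> | [-> | ->]] ->]]]; tauto.
  - intros [H | [H | [H | [H | [H | H]]]]]; try tauto; right; eauto.
Qed.

(** A vertex maximising a non-constant affine [f] over the six points is exposed, and since
    the six points are symmetric about [O], its reflection minimises [f]. *)
Lemma six_points_support a b c O S f P Q : affine_fun f -> f Q < f P ->
  (forall z, S z -> six_points a b c O z) ->
  f b <= f a -> f c <= f a ->
  2 * f O - f a <= f a -> 2 * f O - f b <= f a -> 2 * f O - f c <= f a ->
  ~ Defs.interior (conv S) a /\ ~ Defs.interior (conv S) (reflect_pt O a).
Proof.
  intros Hf HPQ HS Hb Hc Ha' Hb' Hc'. split.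
  - apply (not_interior_conv_support S a f P Q Hf HPQ).
    intros z Hz. destruct (HS z Hz) as [-> | [-> | [-> | [-> | [-> | ->]]]]];
      rewrite ?affine_fun_reflect by exact Hf; lra.
  - apply (not_interior_conv_support S _ (fun z => -1 * f z + 0) Q P);
      [apply affine_fun_scale_add, Hf | lra |].
    intros z Hz. destruct (HS z Hz) as [-> | [-> | [-> | [-> | [-> | ->]]]]];
      rewrite ?affine_fun_reflect by exact Hf; lra.
Qed.

Definition vertex_exposed (p q r : R) : Prop := p <= 1/2 \/ 1/2 <= q \/ 1/2 <= r.

Lemma vertex_exposed_of_not_interior a b c O S : noncollinear a b c ->
  S b -> S c -> S (reflect_pt O b) -> S (reflect_pt O c) -> ~ Defs.interior (conv S) a ->
  vertex_exposed (bary a b c O) (bary b c a O) (bary c a b O).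
Proof.
  intros Hnc Hb Hc Hb' Hc' Ha. unfold vertex_exposed.
  destruct (Rle_lt_dec (bary a b c O) (1/2)); [tauto|].
  destruct (Rle_lt_dec (1/2) (bary b c a O)); [tauto|].
  destruct (Rle_lt_dec (1/2) (bary c a b O)); [tauto|].
  exfalso. apply Ha, (vertex_interior a b c O S); assumption.
Qed.

Lemma vertex_not_interior a b c O S : noncollinear a b c ->
  (forall z, S z -> six_points a b c O z) ->
  vertex_exposed (bary a b c O) (bary b c a O) (bary c a b O) ->
  ~ Defs.interior (conv S) a /\ ~ Defs.interior (conv S) (reflect_pt O a).
Proof.
  intros Hnc HS Hexp.
  pose proof (bary_at_vertices a b c Hnc) as V.
  destruct Hexp as [H | [H | H]].
  - apply (six_points_support a b c O S _ a b (affine_fun_bary a b c) ltac:(lra) HS); lra.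
  - apply (six_points_support a b c O S _ a b
             (affine_fun_scale_add _ (-1) 0 (affine_fun_bary b c a)) ltac:(lra) HS); lra.
  - apply (six_points_support a b c O S _ a c
             (affine_fun_scale_add _ (-1) 0 (affine_fun_bary c a b)) ltac:(lra) HS); lra.
Qed.

Lemma convex_position_iff S : convex_position S <-> forall x, S x -> ~ Defs.interior (conv S) x.
Proof.
  unfold convex_position, boundary. split; [intros H x Hx; apply H, Hx|].
  intros H x Hx. split; [|exact (H x Hx)].
  intros eps Heps. exists x. split; [apply conv_sub, Hx|]. rewrite dist_xx. exact Heps.
Qed.

Lemma M_set_tri_set_iff a b c O : noncollinear a b c ->
  M_set (tri_set a b c) O <->
  vertex_exposed (bary a b c O) (bary b c a O) (bary c a b O) /\
  vertex_exposed (bary b c a O) (bary c a b O) (bary a b c O) /\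
  vertex_exposed (bary c a b O) (bary a b c O) (bary b c a O).
Proof.
  intros Hnc. pose proof (noncollinear_rotate _ _ _ Hnc) as Hnc2.
  pose proof (noncollinear_rotate _ _ _ Hnc2) as Hnc3.
  unfold M_set, admissible_center. rewrite convex_position_iff.
  set (S := fun z => tri_set a b c z \/ reflect_set O (tri_set a b c) z).
  assert (HS : forall z, S z <-> six_points a b c O z) by (intros z; apply tri_set_reflect_iff).
  assert (HS1 : forall z, S z -> six_points a b c O z) by (intros z; apply HS).
  assert (HS2 : forall z, S z -> six_points b c a O z) by (intros z Hz; apply six_points_rotate, HS1, Hz).
  assert (HS3 : forall z, S z -> six_points c a b O z) by (intros z Hz; apply six_points_rotate, HS2, Hz).
  assert (Hin : forall z, six_points a b c O z -> S z) by (intros z; apply HS).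
  split.
  - intros HM. split; [|split]; apply vertex_exposed_of_not_interior with S;
      auto; try apply HM; apply Hin; unfold six_points; tauto.
  - intros [Ea [Eb Ec]] x Hx.
    destruct (vertex_not_interior a b c O S Hnc HS1 Ea).
    destruct (vertex_not_interior b c a O S Hnc2 HS2 Eb).
    destruct (vertex_not_interior c a b O S Hnc3 HS3 Ec).
    destruct (HS1 x Hx) as [-> | [-> | [-> | [-> | [-> | ->]]]]]; assumption.
Qed.

(** Paths are only continuous on [[0, 1]]; precomposing with [clamp] extends them to [R]. *)
Definition clamp (t : R) : R := Rmax 0 (Rmin 1 t).

Lemma clamp_in t : 0 <= clamp t <= 1.
Proof. unfold clamp, Rmax, Rmin. repeat destruct Rle_dec; lra. Qed.

Lemma clamp_id t : 0 <= t <= 1 -> clamp t = t.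
Proof. intros. unfold clamp, Rmax, Rmin. repeat destruct Rle_dec; lra. Qed.

Lemma clamp_Rabs_le s t : Rabs (clamp s - clamp t) <= Rabs (s - t).
Proof. unfold clamp, Rmax, Rmin. repeat destruct Rle_dec; split_Rabs; lra. Qed.

Lemma continuity_affine_clamp_path f g m : affine_fun f -> cont_path g ->
  continuity (fun t => f (g (clamp t)) - m).
Proof.
  intros Hf Hg t0. destruct (affine_fun_lipschitz f Hf) as [K [HK HL]].
  intros eps Heps.
  destruct (Hg (clamp t0) (clamp_in t0) (eps / (K + 1))) as [d [Hd Hd2]];
    [apply Rdiv_lt_0_compat; lra|].
  exists d. split; [exact Hd|]. intros t [_ Ht]. simpl in *. unfold Rdist in *.
  pose proof (clamp_Rabs_le t t0).
  specialize (Hd2 (clamp t) (clamp_in t) ltac:(lra)).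
  specialize (HL (g (clamp t0)) (g (clamp t))). rewrite dist_comm in HL.
  replace (f (g (clamp t)) - m - (f (g (clamp t0)) - m)) with (f (g (clamp t)) - f (g (clamp t0))) by ring.
  assert (eps / (K + 1) * (K + 1) = eps) by (field; lra).
  pose proof (dist_ge0 (g (clamp t)) (g (clamp t0))). nra.
Qed.

Lemma path_lt_level f g m : affine_fun f -> cont_path g ->
  (forall t, 0 <= t <= 1 -> f (g t) <> m) -> f (g 0) < m -> f (g 1) < m.
Proof.
  intros Hf Hg Hne H0.
  destruct (Rlt_le_dec (f (g 1)) m) as [H1 | H1]; [exact H1|]. exfalso.
  assert (H1' : m < f (g 1)) by (assert (f (g 1) <> m) by (apply Hne; lra); lra).
  destruct (IVT _ 0 1 (continuity_affine_clamp_path f g m Hf Hg) ltac:(lra))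
    as [z [Hz Hz0]]; rewrite ?clamp_id by lra; try lra.
  rewrite clamp_id in Hz0 by lra. apply (Hne z Hz). lra.
Qed.

Definition orient (s : bool) (x : R) : R := if s then 1 - x else x.
Definition side (s : bool) (x : R) : Prop := orient s x < 1/2.
Definition wside (s : bool) (x : R) : Prop := orient s x <= 1/2.

Definition sides (sa sb sc : bool) (p q r : R) : Prop := side sa p /\ side sb q /\ side sc r.
Definition wsides (sa sb sc : bool) (p q r : R) : Prop := wside sa p /\ wside sb q /\ wside sc r.

Lemma affine_fun_orient f s : affine_fun f -> affine_fun (fun z => orient s (f z)).
Proof.
  intros [n1 [n2 [k Hf]]].
  destruct s; [exists (- n1), (- n2), (1 - k) | exists n1, n2, k]; intros z; simpl; rewrite Hf; ring.
Qed.

Lemma orient_comb s t u v : orient s (t * u + (1 - t) * v) = t * orient s u + (1 - t) * orient s v.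
Proof. destruct s; simpl; ring. Qed.

Lemma side_ne_half s x : side s x -> x <> 1/2.
Proof. unfold side, orient. destruct s; lra. Qed.

Lemma side_comb s t u v : 0 <= t <= 1 -> side s u -> side s v -> side s (t * u + (1 - t) * v).
Proof.
  unfold side. rewrite orient_comb. intros Ht Hu Hv.
  assert (0 <= t * (1/2 - orient s u)) by (apply Rmult_le_pos; lra).
  assert (0 <= (1 - t) * (1/2 - orient s v)) by (apply Rmult_le_pos; lra). nra.
Qed.

Lemma side_comb_wside s t u v : 0 < t <= 1 -> side s u -> wside s v -> side s (t * u + (1 - t) * v).
Proof. unfold side, wside. rewrite orient_comb. intros. nra. Qed.

Lemma path_side f g s : affine_fun f -> cont_path g ->
  (forall t, 0 <= t <= 1 -> f (g t) <> 1/2) -> side s (f (g 0)) -> side s (f (g 1)).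
Proof.
  intros Hf Hg Hne.
  apply (path_lt_level (fun z => orient s (f z))); [apply affine_fun_orient, Hf | exact Hg |].
  intros t Ht. specialize (Hne t Ht). unfold orient. destruct s; lra.
Qed.

Lemma closure_wside A f s p : affine_fun f -> Defs.closure A p ->
  (forall y, A y -> side s (f y)) -> wside s (f p).
Proof.
  intros Hf Hcl HA. unfold wside. destruct (Rle_lt_dec (orient s (f p)) (1/2)) as [H | H]; [exact H|].
  exfalso.
  destruct (affine_fun_lipschitz _ (affine_fun_scale_add _ (-1) 0 (affine_fun_orient f s Hf)))
    as [K [HK HL]].
  destruct (lipschitz_lt_nbhd _ K (- (1/2)) p HK HL ltac:(lra)) as [eps [Heps Hball]].
  destruct (Hcl eps Heps) as [y [Hy Hpy]].
  specialize (Hball y Hpy). specialize (HA y Hy). unfold side in HA. lra.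
Qed.

Definition seg (x y : pt) (t : R) : pt := padd (pscale t y) (pscale (1 - t) x).

Lemma seg_translate x y t : seg x y t = padd x (pscale t (psub y x)).
Proof. unfold seg, padd, pscale, psub. simpl. f_equal; ring. Qed.

Lemma seg_cont x y : cont_path (seg x y).
Proof.
  intros t _ eps Heps.
  set (A := Rabs (fst (psub y x)) + Rabs (snd (psub y x))).
  assert (HA : 0 <= A)
    by (unfold A; pose proof (Rabs_pos (fst (psub y x))); pose proof (Rabs_pos (snd (psub y x))); lra).
  exists (eps / (A + 1)). split; [apply Rdiv_lt_0_compat; lra|]. intros s _ Hst.
  replace (seg x y s) with (padd (seg x y t) (pscale (s - t) (psub y x)))
    by (unfold seg, padd, pscale, psub; simpl; f_equal; ring).
  rewrite dist_comm. eapply Rle_lt_trans; [apply dist_translate|]. fold A.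
  assert (eps / (A + 1) * (A + 1) = eps) by (field; lra).
  pose proof (Rabs_pos (s - t)). nra.
Qed.

Lemma seg_near x y eps : 0 < eps -> exists t, 0 < t <= 1 /\ Defs.dist x (seg x y t) < eps.
Proof.
  intros Heps.
  set (A := Rabs (fst (psub y x)) + Rabs (snd (psub y x))).
  assert (HA : 0 <= A)
    by (unfold A; pose proof (Rabs_pos (fst (psub y x))); pose proof (Rabs_pos (snd (psub y x))); lra).
  assert (Hd : eps / (2 * (A + 1)) * (2 * (A + 1)) = eps) by (field; lra).
  assert (Ht : 0 < Rmin 1 (eps / (2 * (A + 1)))) by (apply Rmin_pos; [lra | apply Rdiv_lt_0_compat; lra]).
  pose proof (Rmin_l 1 (eps / (2 * (A + 1)))). pose proof (Rmin_r 1 (eps / (2 * (A + 1)))).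
  set (t := Rmin 1 (eps / (2 * (A + 1)))) in *. clearbody t.
  exists t. split; [lra|].
  rewrite seg_translate. eapply Rle_lt_trans; [apply dist_translate|].
  rewrite (Rabs_pos_eq t) by lra. fold A.
  nra.
Qed.

Lemma midline_ab_ac a b c x : noncollinear a b c ->
  cross (psub (midpoint a c) (midpoint a b)) (psub x (midpoint a b)) =
  1/2 * cross (psub b a) (psub c a) * (bary a b c x - 1/2).
Proof. unfold noncollinear, bary, midpoint, cross, psub; simpl. intros H. field. exact H. Qed.

Lemma midline_ab_bc a b c x : noncollinear a b c ->
  cross (psub (midpoint b c) (midpoint a b)) (psub x (midpoint a b)) =
  - (1/2) * cross (psub b a) (psub c a) * (bary b c a x - 1/2).
Proof.
  intros H. unfold bary. rewrite (cross_rotate a b c).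
  revert H. unfold noncollinear, midpoint, cross, psub; simpl. intros H. field. exact H.
Qed.

Lemma midline_ac_bc a b c x : noncollinear a b c ->
  cross (psub (midpoint b c) (midpoint a c)) (psub x (midpoint a c)) =
  1/2 * cross (psub b a) (psub c a) * (bary c a b x - 1/2).
Proof.
  intros H. unfold bary. rewrite <- (cross_rotate c a b).
  revert H. unfold noncollinear, midpoint, cross, psub; simpl. intros H. field. exact H.
Qed.

Lemma midline_complement_iff a b c x : noncollinear a b c ->
  midline_complement a b c x <->
  bary a b c x <> 1/2 /\ bary b c a x <> 1/2 /\ bary c a b x <> 1/2.
Proof.
  intros H. unfold midline_complement, line_through.
  rewrite (midline_ab_ac a b c x H), (midline_ab_bc a b c x H), (midline_ac_bc a b c x H).
  assert (HD : cross (psub b a) (psub c a) <> 0) by exact H.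
  set (D := cross (psub b a) (psub c a)) in *.
  assert (Hz : forall k e, k <> 0 -> (k * D * (e - 1/2) = 0 <-> e = 1/2)).
  { intros k e Hk. split; [|intros ->; ring].
    intros E. apply Rmult_integral in E as [E | E]; [apply Rmult_integral in E as [E | E] |]; lra. }
  rewrite !Hz by lra. tauto.
Qed.

Definition region (a b c : pt) (sa sb sc : bool) (y : pt) : Prop :=
  sides sa sb sc (bary a b c y) (bary b c a y) (bary c a b y).

Definition closed_region (a b c : pt) (sa sb sc : bool) (y : pt) : Prop :=
  wsides sa sb sc (bary a b c y) (bary b c a y) (bary c a b y).

Lemma region_midline_complement a b c sa sb sc y : noncollinear a b c ->
  region a b c sa sb sc y -> midline_complement a b c y.
Proof.
  intros H [Ha [Hb Hc]]. apply midline_complement_iff; [exact H|].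
  repeat split; eapply side_ne_half; eassumption.
Qed.

Lemma midline_complement_region a b c x : noncollinear a b c ->
  midline_complement a b c x -> exists sa sb sc, region a b c sa sb sc x.
Proof.
  intros H Hx. apply midline_complement_iff in Hx as [Ha [Hb Hc]]; [|exact H].
  assert (Hs : forall e, e <> 1/2 -> exists s, side s e).
  { intros e He. unfold side, orient.
    destruct (Rlt_le_dec e (1/2)); [exists false | exists true]; lra. }
  destruct (Hs _ Ha) as [sa Hsa]. destruct (Hs _ Hb) as [sb Hsb]. destruct (Hs _ Hc) as [sc Hsc].
  exists sa, sb, sc. repeat split; assumption.
Qed.

Lemma region_seg a b c sa sb sc x y t : 0 <= t <= 1 ->
  region a b c sa sb sc x -> region a b c sa sb sc y -> region a b c sa sb sc (seg x y t).
Proof.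
  intros Ht [Ha [Hb Hc]] [Ha' [Hb' Hc']]. unfold region, sides, seg.
  rewrite !affine_fun_comb by apply affine_fun_bary. repeat split; apply side_comb; assumption.
Qed.

(** Each region is convex and no path in the complement crosses a midline, so the
    path components of the complement are exactly the non-empty regions. *)
Lemma path_in_midline_complement_iff a b c sa sb sc x y : noncollinear a b c ->
  region a b c sa sb sc x -> (path_in (midline_complement a b c) x y <-> region a b c sa sb sc y).
Proof.
  intros H Hx. split.
  - intros [g [Hg [H0 [H1 HU]]]]. subst x y.
    assert (Hne : forall t, 0 <= t <= 1 ->
              bary a b c (g t) <> 1/2 /\ bary b c a (g t) <> 1/2 /\ bary c a b (g t) <> 1/2)
      by (intros t Ht; apply midline_complement_iff; auto).
    destruct Hx as [Ha [Hb Hc]].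
    repeat split; (apply path_side; [apply affine_fun_bary | exact Hg | intros t Ht; apply Hne, Ht |]);
      assumption.
  - intros Hy. exists (seg x y). split; [apply seg_cont|]. split; [|split].
    + unfold seg, padd, pscale. destruct x; simpl; f_equal; ring.
    + unfold seg, padd, pscale. destruct y; simpl; f_equal; ring.
    + intros t Ht. apply (region_midline_complement a b c sa sb sc); [exact H|].
      apply region_seg; assumption.
Qed.

Lemma component_midline_complement_iff a b c Rg : noncollinear a b c ->
  component (midline_complement a b c) Rg <->
  exists sa sb sc, (exists x, region a b c sa sb sc x) /\ forall y, Rg y <-> region a b c sa sb sc y.
Proof.
  intros H. split.
  - intros [x [Hx HRg]]. destruct (midline_complement_region a b c x H Hx) as [sa [sb [sc Hr]]].
    exists sa, sb, sc. split; [exists x; exact Hr|].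
    intros y. rewrite HRg. apply path_in_midline_complement_iff; assumption.
  - intros [sa [sb [sc [[x Hx] HRg]]]]. exists x.
    split; [apply (region_midline_complement a b c sa sb sc x H Hx)|].
    intros y. rewrite HRg. symmetry. apply path_in_midline_complement_iff; assumption.
Qed.

Lemma closure_region_iff a b c sa sb sc x0 v :
  region a b c sa sb sc x0 ->
  Defs.closure (region a b c sa sb sc) v <-> closed_region a b c sa sb sc v.
Proof.
  intros Hx0. split.
  - intros Hv.
    repeat split; (eapply closure_wside; [apply affine_fun_bary | exact Hv |]);
      intros y [Ha [Hb Hc]]; assumption.
  - intros [Ha [Hb Hc]] eps Heps. destruct (seg_near v x0 eps Heps) as [t [Ht Hd]].
    exists (seg v x0 t). split; [|exact Hd].
    destruct Hx0 as [Ha' [Hb' Hc']]. unfold region, sides, seg.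
    rewrite !affine_fun_comb by apply affine_fun_bary.
    repeat split; apply side_comb_wside; assumption.
Qed.

Lemma closure_ext (A B : pt -> Prop) v : (forall y, A y <-> B y) ->
  Defs.closure A v <-> Defs.closure B v.
Proof.
  intros HAB. split; intros Hv eps Heps; destruct (Hv eps Heps) as [y [Hy Hd]];
    exists y; split; [apply HAB | | apply HAB |]; assumption.
Qed.

Lemma vertex_exposed_iff_sign_pattern p q r : p + q + r = 1 ->
  vertex_exposed p q r /\ vertex_exposed q r p /\ vertex_exposed r p q <->
  exists sa sb sc, (exists x y z, x + y + z = 1 /\ sides sa sb sc x y z) /\
    wsides sa sb sc p q r /\
    ~ wsides sa sb sc 1 0 0 /\ ~ wsides sa sb sc 0 1 0 /\ ~ wsides sa sb sc 0 0 1.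
Proof.
  unfold vertex_exposed, sides, wsides, side, wside, orient. intros Hs. split.
  - intros [Ea [Eb Ec]].
    assert (Cases : (p <= 1/2 /\ q <= 1/2 /\ r <= 1/2) \/ (1/2 <= p /\ 1/2 <= q) \/
                    (1/2 <= q /\ 1/2 <= r) \/ (1/2 <= r /\ 1/2 <= p)).
    { destruct (Rle_lt_dec p (1/2)); destruct (Rle_lt_dec q (1/2)); destruct (Rle_lt_dec r (1/2));
        try lra;
        destruct Ea as [? | [? | ?]]; destruct Eb as [? | [? | ?]]; destruct Ec as [? | [? | ?]]; lra. }
    destruct Cases as [C | [C | [C | C]]];
      [ exists false, false, false; split; [exists (1/3), (1/3), (1/3) |]
      | exists true, true, false; split; [exists (3/4), (3/4), (-1/2) |]
      | exists false, true, true; split; [exists (-1/2), (3/4), (3/4) |]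
      | exists true, false, true; split; [exists (3/4), (-1/2), (3/4) |] ];
      lra.
  - intros [sa [sb [sc [[x [y [z [Hxyz Hsides]]]] [HO [Na [Nb Nc]]]]]]].
    destruct sa, sb, sc; lra.
Qed.

Lemma region_nonempty_iff a b c sa sb sc : noncollinear a b c ->
  (exists x, region a b c sa sb sc x) <-> exists p q r, p + q + r = 1 /\ sides sa sb sc p q r.
Proof.
  intros H. split.
  - intros [x Hx]. exists (bary a b c x), (bary b c a x), (bary c a b x).
    split; [apply bary_sum, H | exact Hx].
  - intros [p [q [r [Hs Hx]]]]. destruct (bary_surj a b c p q r H Hs) as [x [Hp [Hq Hr]]].
    exists x. unfold region. rewrite Hp, Hq, Hr. exact Hx.
Qed.

Lemma closed_region_vertices a b c sa sb sc : noncollinear a b c ->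
  (closed_region a b c sa sb sc a <-> wsides sa sb sc 1 0 0) /\
  (closed_region a b c sa sb sc b <-> wsides sa sb sc 0 1 0) /\
  (closed_region a b c sa sb sc c <-> wsides sa sb sc 0 0 1).
Proof.
  intros H. unfold closed_region.
  destruct (bary_at_vertices a b c H) as (-> & -> & -> & -> & -> & -> & -> & -> & ->). tauto.
Qed.

Lemma midline_regions_iff a b c O : noncollinear a b c ->
  (exists Rg : pt -> Prop,
     component (midline_complement a b c) Rg /\ Defs.closure Rg O /\
     ~ Defs.closure Rg a /\ ~ Defs.closure Rg b /\ ~ Defs.closure Rg c) <->
  exists sa sb sc, (exists p q r, p + q + r = 1 /\ sides sa sb sc p q r) /\
    wsides sa sb sc (bary a b c O) (bary b c a O) (bary c a b O) /\
    ~ wsides sa sb sc 1 0 0 /\ ~ wsides sa sb sc 0 1 0 /\ ~ wsides sa sb sc 0 0 1.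
Proof.
  intros H. split.
  - intros [Rg [HRg HO]].
    destruct (proj1 (component_midline_complement_iff a b c Rg H) HRg) as [sa [sb [sc [[x Hx] HRx]]]].
    exists sa, sb, sc. split; [apply (region_nonempty_iff a b c sa sb sc H); exists x; exact Hx|].
    destruct (closed_region_vertices a b c sa sb sc H) as [<- [<- <-]].
    rewrite !(closure_ext _ _ _ HRx), !(closure_region_iff a b c sa sb sc x) in HO by exact Hx.
    exact HO.
  - intros [sa [sb [sc [Hne HO]]]].
    destruct (proj2 (region_nonempty_iff a b c sa sb sc H) Hne) as [x Hx].
    exists (region a b c sa sb sc). split.
    + apply component_midline_complement_iff; [exact H|].
      exists sa, sb, sc. split; [exists x; exact Hx | tauto].
    + destruct (closed_region_vertices a b c sa sb sc H) as [<- [<- <-]] in HO.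
      rewrite !(closure_region_iff a b c sa sb sc x) by exact Hx. exact HO.
Qed.

Theorem mainTheorem4 (a b c : pt) (Hnc : noncollinear a b c) (O : pt) :
  M_set (tri_set a b c) O <->
  exists Rg : pt -> Prop,
    component (midline_complement a b c) Rg /\
    closure Rg O /\
    ~ closure Rg a /\ ~ closure Rg b /\ ~ closure Rg c.
Proof.
  rewrite (M_set_tri_set_iff a b c O Hnc), (midline_regions_iff a b c O Hnc).
  apply vertex_exposed_iff_sign_pattern, bary_sum, Hnc.
Qed.
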